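(* Let $X$ be a nonempty set and $d$ a weak almost partial metric on $X$ such that $(X,d)$ is 0-complete. Let $T:X\to X$, $G\in\{M_1,M_2\}$, and suppose $d(Tx,Ty)\le\varphi(G(x,y))$ for all $x,y\in X$, for some nearly right admissible asymptotic normal function $\varphi:[0,\infty)\to[0,\infty)$. Then there is $z\in X$ with $d(z,z)=0$ such that $\mathrm{Fix}(T;d)=\mathrm{Fix}(T)=\{z\}$, and $d(T^nx,z)\to0$ as $n\to\infty$ for each $x\in X$.
   Context: A symmetric on $X$ is a map $d:X\times X\to[0,\infty)$ with $d(x,y)=d(y,x)$. It is a weak almost partial metric if it is triangular ($d(x,z)\le d(x,y)+d(y,z)$ for all $x,y,z$) and sufficient ($d(x,y)=0$ implies $x=y$). A sequence $(x_n)$ $0d$-converges to $x$ if $d(x_n,x)\to0$; it is $0d$-Cauchy if for every $\varepsilon>0$ there is $j$ with $d(x_m,x_n)<\varepsilon$ whenever $j\le m<n$; $(X,d)$ is 0-complete if every $0d$-Cauchy sequence $0d$-converges to some point. $\mathrm{Fix}(T;d)=\{z: d(z,Tz)=0\}$, $\mathrm{Fix}(T)=\{z: Tz=z\}$. Notation: $M_1(x,y)=d(x,y)$, $H(x,y)=\max\{d(x,Tx),d(y,Ty)\}$, $M_2=\max\{M_1,H\}$. $\varphi$ is normal if $\varphi(0)=0$ and $\varphi(t)<t$ for $t>0$; asymptotic normal if normal and every sequence $(r_n)$ in $[0,\infty)$ with $r_{n+1}\le\varphi(r_n)$ for all $n$ tends to $0$; nearly right admissible if normal and there is a countable $Q\subseteq(0,\infty)$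 with $\max\{\limsup_{t\to s+}\varphi(t),\varphi(s)\}<s$ for all $s\in(0,\infty)\setminus Q$. *)

From Stdlib Require Import Reals.
Open Scope R_scope.

Definition symmetric_on {X : Type} (d : X -> X -> R) : Prop :=
  (forall x y, 0 <= d x y) /\ (forall x y, d x y = d y x).

Definition triangular {X : Type} (d : X -> X -> R) : Prop :=
  forall x y z, d x z <= d x y + d y z.

Definition sufficient {X : Type} (d : X -> X -> R) : Prop :=
  forall x y, d x y = 0 -> x = y.

Definition weak_almost_partial_metric {X : Type} (d : X -> X -> R) : Prop :=
  symmetric_on d /\ triangular d /\ sufficient d.

Definition d0_converges {X : Type} (d : X -> X -> R) (u : nat -> X) (x : X) : Prop :=
  Un_cv (fun n => d (u n) x) 0.

Definition d0_Cauchy {X : Type} (d : X -> X -> R) (u : nat -> X) : Prop :=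
  forall eps, eps > 0 -> exists j : nat, forall m n : nat,
    (j <= m)%nat -> (m < n)%nat -> d (u m) (u n) < eps.

Definition zero_complete {X : Type} (d : X -> X -> R) : Prop :=
  forall u : nat -> X, d0_Cauchy d u -> exists x, d0_converges d u x.

Definition Fix_d {X : Type} (d : X -> X -> R) (T : X -> X) (z : X) : Prop :=
  d z (T z) = 0.

Definition Fix {X : Type} (T : X -> X) (z : X) : Prop := T z = z.

Definition M1 {X : Type} (d : X -> X -> R) (x y : X) : R := d x y.
Definition H {X : Type} (d : X -> X -> R) (T : X -> X) (x y : X) : R :=
  Rmax (d x (T x)) (d y (T y)).
Definition M2 {X : Type} (d : X -> X -> R) (T : X -> X) (x y : X) : R :=
  Rmax (M1 d x y) (H d T x y).

(* phi : [0,oo) -> [0,oo), represented as a function R -> R mapping [0,oo) into [0,oo);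
   values outside [0,oo) are irrelevant. *)
Definition maps_nonneg (phi : R -> R) : Prop := forall t, 0 <= t -> 0 <= phi t.

Definition normal (phi : R -> R) : Prop :=
  maps_nonneg phi /\ phi 0 = 0 /\ forall t, t > 0 -> phi t < t.

Definition asymptotic_normal (phi : R -> R) : Prop :=
  normal phi /\
  forall r : nat -> R, (forall n, 0 <= r n) -> (forall n, r (S n) <= phi (r n)) ->
    Un_cv r 0.

(* limsup_{t -> s+} phi t < s, unfolded: some bound c < s holds for phi on (s, s+delta). *)
Definition limsup_right_lt (phi : R -> R) (s : R) : Prop :=
  exists c delta, c < s /\ delta > 0 /\ forall t, s < t < s + delta -> phi t <= c.

Definition countable_set (Q : R -> Prop) : Prop :=
  exists f : nat -> R, forall q, Q q -> exists n, f n = q.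

Definition nearly_right_admissible (phi : R -> R) : Prop :=
  normal phi /\
  exists Q : R -> Prop, countable_set Q /\ (forall q, Q q -> q > 0) /\
    forall s, s > 0 -> ~ Q s -> limsup_right_lt phi s /\ phi s < s.

(* The orbit of any point is 0d-Cauchy.  Its step lengths obey r (n+1) <= phi (r n), hence
   tend to 0 by asymptotic normality.  Given eps, pick a level s in [eps/2, eps] outside the
   exceptional countable set, so that t - phi t stays above a positive gap on [s, s + eta).
   Once the steps are shorter than eta, an induction shows that no later point of the orbit
   leaves the d-ball of radius s around an earlier one: if d(u_m, u_(p+1)) first reached
   [s, s + eta), the contraction applied to (u_m, u_(p+1)) would contradict the gap.  The
   limit z is then a fixed point, and the contraction forces d(w, w) = 0 at fixed points,
   which yields uniqueness and Fix(T; d) = Fix(T). *)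
From Stdlib Require Import Reals Lra Lia.
Open Scope R_scope.

Section NestedIntervals.

Variable f : nat -> R.

Definition trisect (n : nat) (I : R * R) : R * R :=
  let (a, b) := I in
  if Rle_dec (f n) (a + (b - a) / 3) then (a + 2 * (b - a) / 3, b)
  else (a, a + (b - a) / 3).

Fixpoint nested (a b : R) (n : nat) : R * R :=
  match n with O => (a, b) | S n => trisect n (nested a b n) end.

Lemma trisect_spec n I : fst I < snd I ->
  fst I <= fst (trisect n I) /\ fst (trisect n I) < snd (trisect n I) /\
  snd (trisect n I) <= snd I /\ (f n < fst (trisect n I) \/ snd (trisect n I) < f n).
Proof. destruct I as [a b]; simpl; intros; unfold trisect; destruct Rle_dec; simpl; lra. Qed.

Lemma nested_lt a b n : a < b -> fst (nested a b n) < snd (nested a b n).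
Proof. intros Hab; induction n as [|n IH]; [exact Hab|apply (trisect_spec n _ IH)]. Qed.

Lemma nested_step a b n : a < b ->
  fst (nested a b n) <= fst (nested a b (S n)) /\
  fst (nested a b (S n)) < snd (nested a b (S n)) /\
  snd (nested a b (S n)) <= snd (nested a b n) /\
  (f n < fst (nested a b (S n)) \/ snd (nested a b (S n)) < f n).
Proof. intros Hab; exact (trisect_spec n _ (nested_lt a b n Hab)). Qed.

Lemma nested_monotone a b n k : a < b ->
  fst (nested a b n) <= fst (nested a b (n + k)) /\
  snd (nested a b (n + k)) <= snd (nested a b n).
Proof.
  intros Hab; induction k as [|k IH].
  - rewrite Nat.add_0_r; lra.
  - rewrite Nat.add_succ_r; pose proof (nested_step a b (n + k) Hab); lra.
Qed.

Lemma nested_fst_le_snd a b n m : a < b -> fst (nested a b n) <= snd (nested a b m).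
Proof.
  intros Hab.
  destruct (nested_monotone a b n m Hab) as [Hn _].
  destruct (nested_monotone a b m n Hab) as [_ Hm].
  pose proof (nested_lt a b (n + m) Hab).
  rewrite Nat.add_comm in Hm; lra.
Qed.

Lemma exists_notin_range a b : a < b -> exists x, a <= x <= b /\ forall n, f n <> x.
Proof.
  intros Hab.
  set (E := fun y => exists n, y = fst (nested a b n)).
  assert (HE : bound E) by (exists b; intros y [n ->]; exact (nested_fst_le_snd a b n 0 Hab)).
  destruct (completeness E HE (ex_intro _ a (ex_intro _ 0%nat eq_refl))) as [x [Hub Hlub]].
  assert (Hlo : forall n, fst (nested a b n) <= x) by (intros n; apply Hub; exists n; reflexivity).
  assert (Hhi : forall n, x <= snd (nested a b n)).
  { intros n; apply Hlub; intros y [k ->]; apply nested_fst_le_snd, Hab. }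
  exists x; split.
  - exact (conj (Hlo 0%nat) (Hhi 0%nat)).
  - intros n Hn; pose proof (nested_step a b n Hab); pose proof (Hlo (S n)); pose proof (Hhi (S n)).
    lra.
Qed.

End NestedIntervals.

Lemma exists_notin_countable (Q : R -> Prop) a b :
  countable_set Q -> a < b -> exists s, a <= s <= b /\ ~ Q s.
Proof.
  intros [f Hf] Hab.
  destruct (exists_notin_range f a b Hab) as [s [Hs Hf']].
  exists s; split; [exact Hs|].
  intros HQ; destruct (Hf s HQ) as [n Hn]; exact (Hf' n Hn).
Qed.

Lemma normal_le phi t : normal phi -> 0 <= t -> phi t <= t.
Proof.
  intros [_ [H0 Hlt]] Ht; destruct (Req_dec t 0) as [->|Hne].
  - rewrite H0; lra.
  - left; apply Hlt; lra.
Qed.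

Lemma normal_fixed_eq0 phi t : normal phi -> 0 <= t -> t <= phi t -> t = 0.
Proof.
  intros [_ [_ Hlt]] Ht Hle; destruct (Req_dec t 0) as [|Hne]; [assumption|].
  specialize (Hlt t ltac:(lra)); lra.
Qed.

Lemma right_gap phi s : 0 < s -> limsup_right_lt phi s -> phi s < s ->
  exists eta, 0 < eta <= s /\ forall t, s <= t < s + eta -> phi t + 2 * eta < t.
Proof.
  intros Hs [c [delta [Hc [Hdelta Hlim]]]] Hps.
  exists (Rmin (Rmin delta s) (Rmin ((s - c) / 2) ((s - phi s) / 3))).
  assert (Hm : forall u v, Rmin u v <= u /\ Rmin u v <= v /\ (Rmin u v = u \/ Rmin u v = v))
    by (intros u v; unfold Rmin; destruct Rle_dec; lra).
  destruct (Hm delta s) as [H1 [H2 H3]].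
  destruct (Hm ((s - c) / 2) ((s - phi s) / 3)) as [H4 [H5 H6]].
  destruct (Hm (Rmin delta s) (Rmin ((s - c) / 2) ((s - phi s) / 3))) as [H7 [H8 H9]].
  split; [lra|].
  intros t [Hst Ht]; destruct (Req_dec t s) as [->|Hne]; [lra|].
  assert (phi t <= c) by (apply Hlim; lra); lra.
Qed.

Lemma Un_cv_0_eventually_lt (r : nat -> R) eps :
  Un_cv r 0 -> 0 < eps -> exists N, forall n, (N <= n)%nat -> r n < eps.
Proof.
  intros Hr Heps; destruct (Hr eps Heps) as [N HN]; exists N.
  intros n Hn; specialize (HN n Hn); unfold R_dist in HN; rewrite Rminus_0_r in HN.
  apply Rabs_def2 in HN; lra.
Qed.

Section Contraction.

Variables (X : Type) (d : X -> X -> R) (T : X -> X) (G : X -> X -> R) (phi : R -> R).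

Hypothesis d_wapm : weak_almost_partial_metric d.
Hypothesis G_cases : forall x y, G x y = M1 d x y \/ G x y = M2 d T x y.
Hypothesis phi_normal : normal phi.
Hypothesis contraction : forall x y, d (T x) (T y) <= phi (G x y).

Lemma d_nonneg x y : 0 <= d x y.
Proof. apply d_wapm. Qed.

Lemma d_sym x y : d x y = d y x.
Proof. apply d_wapm. Qed.

Lemma d_triangle x y z : d x z <= d x y + d y z.
Proof. apply d_wapm. Qed.

Lemma d_eq0 x y : d x y = 0 -> x = y.
Proof. apply d_wapm. Qed.

Lemma G_eq_d x y : d x (T x) <= d x y -> d y (T y) <= d x y -> G x y = d x y.
Proof.
  unfold M2, M1, H in G_cases; intros Hx Hy.
  destruct (G_cases x y) as [-> | ->]; [reflexivity|].
  unfold Rmax; repeat destruct Rle_dec; lra.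
Qed.

Lemma contraction_le_max x y : d (T x) (T y) <= Rmax (d x y) (phi (M2 d T x y)).
Proof.
  pose proof (contraction x y) as Hc.
  destruct (G_cases x y) as [HG|HG]; rewrite HG in Hc.
  - pose proof (normal_le phi _ phi_normal (d_nonneg x y)).
    pose proof (Rmax_l (d x y) (phi (M2 d T x y))); unfold M1 in Hc; lra.
  - pose proof (Rmax_r (d x y) (phi (M2 d T x y))); lra.
Qed.

Lemma step_contraction x : d (T x) (T (T x)) <= phi (d x (T x)).
Proof.
  pose proof (contraction x (T x)) as Hc.
  destruct (Rle_dec (d (T x) (T (T x))) (d x (T x))) as [Hle|Hgt].
  - rewrite G_eq_d in Hc; lra.
  - exfalso.
    assert (HG : G x (T x) = d x (T x) \/ G x (T x) = d (T x) (T (T x))).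
    { destruct (G_cases x (T x)) as [-> | ->]; [left; reflexivity|right].
      unfold M2, M1, H, Rmax; repeat destruct Rle_dec; lra. }
    pose proof (d_nonneg x (T x)).
    destruct HG as [HG|HG]; rewrite HG in Hc.
    + pose proof (normal_le phi _ phi_normal (d_nonneg x (T x))); lra.
    + pose proof (normal_fixed_eq0 phi _ phi_normal (d_nonneg _ _) Hc); lra.
Qed.

Lemma fixed_point_self_distance w : T w = w -> d w w = 0.
Proof.
  intros Hw.
  assert (HG : G w w = d w w) by (apply G_eq_d; rewrite Hw; lra).
  pose proof (contraction w w) as Hc; rewrite HG, Hw in Hc.
  exact (normal_fixed_eq0 phi _ phi_normal (d_nonneg w w) Hc).
Qed.

Lemma fixed_point_unique w v : T w = w -> T v = v -> w = v.
Proof.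
  intros Hw Hv; apply d_eq0.
  assert (HG : G w v = d w v).
  { pose proof (fixed_point_self_distance w Hw); pose proof (fixed_point_self_distance v Hv).
    pose proof (d_nonneg w v); pose proof (d_sym v w).
    apply G_eq_d; [rewrite Hw|rewrite Hv]; lra. }
  pose proof (contraction w v) as Hc; rewrite HG, Hw, Hv in Hc.
  exact (normal_fixed_eq0 phi _ phi_normal (d_nonneg w v) Hc).
Qed.

Lemma Fix_d_iff_Fix w : Fix_d d T w <-> Fix T w.
Proof.
  unfold Fix_d, Fix; split.
  - intros H0; symmetry; apply d_eq0, H0.
  - intros Hw; rewrite Hw; apply fixed_point_self_distance, Hw.
Qed.

Lemma orbit_steps_vanish x : asymptotic_normal phi ->
  Un_cv (fun n => d (Nat.iter n T x) (Nat.iter (S n) T x)) 0.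
Proof.
  intros [_ Has]; apply Has; [intros; apply d_nonneg|].
  intros n; apply step_contraction.
Qed.

Lemma orbit_stays_in_ball x s eta j :
  0 < eta <= s -> (forall t, s <= t < s + eta -> phi t + 2 * eta < t) ->
  (forall n, (j <= n)%nat -> d (Nat.iter n T x) (Nat.iter (S n) T x) < eta) ->
  forall m n, (j <= m)%nat -> (m < n)%nat -> d (Nat.iter m T x) (Nat.iter n T x) < s.
Proof.
  intros Heta Hgap Hsteps m n Hjm Hmn.
  set (u := fun k => Nat.iter k T x) in *; change (d (u m) (u n) < s).
  assert (Hr : forall k, (m <= k)%nat -> d (u k) (u (S k)) < eta) by (intros; apply Hsteps; lia).
  induction Hmn as [|p Hmp IH].
  - pose proof (Hr m (le_n m)); lra.
  - set (t := d (u m) (u (S p))).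
    destruct (Rlt_or_le t s) as [|Hst]; [assumption|exfalso].
    assert (HuS : forall k, T (u k) = u (S k)) by reflexivity.
    pose proof (Hr m (le_n m)); pose proof (Hr p ltac:(lia)); pose proof (Hr (S p) ltac:(lia)).
    assert (Ht : t < s + eta) by (pose proof (d_triangle (u m) (u p) (u (S p))); unfold t; lra).
    assert (Hc : d (u (S m)) (u (S (S p))) <= phi t).
    { change (d (T (u m)) (T (u (S p))) <= phi t).
      assert (HG : G (u m) (u (S p)) = t) by (apply G_eq_d; rewrite HuS; fold t; lra).
      rewrite <- HG; apply contraction. }
    assert (t <= d (u m) (u (S m)) + d (u (S m)) (u (S (S p))) + d (u (S p)) (u (S (S p)))).
    { pose proof (d_triangle (u m) (u (S m)) (u (S p))).
      pose proof (d_triangle (u (S m)) (u (S (S p))) (u (S p))).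
      rewrite (d_sym (u (S (S p)))) in *; unfold t; lra. }
    pose proof (Hgap t (conj Hst Ht)); lra.
Qed.

Lemma orbit_Cauchy x : nearly_right_admissible phi -> asymptotic_normal phi ->
  d0_Cauchy d (fun n => Nat.iter n T x).
Proof.
  intros [_ [Q [HQc [_ HQ]]]] Has eps Heps.
  destruct (exists_notin_countable Q (eps / 2) eps HQc ltac:(lra)) as [s [Hs HnQ]].
  destruct (HQ s ltac:(lra) HnQ) as [Hlim Hps].
  destruct (right_gap phi s ltac:(lra) Hlim Hps) as [eta [Heta Hgap]].
  destruct (Un_cv_0_eventually_lt _ eta (orbit_steps_vanish x Has) ltac:(lra)) as [j Hj].
  exists j; intros m n Hjm Hmn.
  pose proof (orbit_stays_in_ball x s eta j Heta Hgap Hj m n Hjm Hmn); lra.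
Qed.

Lemma orbit_limit_fixed x z : d0_converges d (fun n => Nat.iter n T x) z -> T z = z.
Proof.
  set (u := fun n => Nat.iter n T x); intros Hz; symmetry; apply d_eq0.
  set (a := d z (T z)); destruct (Req_dec a 0) as [|Ha]; [assumption|exfalso].
  assert (Hpa : phi a < a) by (apply phi_normal; pose proof (d_nonneg z (T z)); unfold a in *; lra).
  assert (Hpa0 : 0 <= phi a) by (apply phi_normal, d_nonneg).
  set (eta := (a - phi a) / 4).
  destruct (Un_cv_0_eventually_lt _ eta Hz ltac:(unfold eta; lra)) as [N HN].
  cbv beta in HN.
  pose proof (HN N (le_n N)) as HzN; pose proof (HN (S N) ltac:(lia)) as HzSN.
  assert (HrN : d (u N) (u (S N)) < 2 * eta).
  { pose proof (d_triangle (u N) z (u (S N))); rewrite (d_sym z (u (S N))) in *; lra. }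
  assert (HM2 : M2 d T z (u N) = a).
  { unfold M2, M1, H; change (T (u N)) with (u (S N)); rewrite (d_sym z (u N)); fold a.
    unfold eta in *; unfold Rmax; repeat destruct Rle_dec; lra. }
  pose proof (contraction_le_max z (u N)) as Hc; rewrite HM2 in Hc.
  change (T (u N)) with (u (S N)) in Hc.
  pose proof (d_triangle z (u (S N)) (T z)) as Htr; fold a in Htr.
  rewrite (d_sym z (u N)), (d_sym (T z) (u (S N))), (d_sym z (u (S N))) in *.
  unfold Rmax in Hc; destruct Rle_dec; unfold eta in *; lra.
Qed.

Lemma orbit_converges_to_fixed_point x :
  zero_complete d -> nearly_right_admissible phi -> asymptotic_normal phi ->
  exists z, T z = z /\ d0_converges d (fun n => Nat.iter n T x) z.
Proof.
  intros Hcomplete Hnra Has.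
  destruct (Hcomplete _ (orbit_Cauchy x Hnra Has)) as [z Hz].
  exists z; split; [exact (orbit_limit_fixed x z Hz)|exact Hz].
Qed.

End Contraction.

Theorem theorem5 (X : Type) (x0 : X) (d : X -> X -> R) (T : X -> X)
  (G : X -> X -> R) (phi : R -> R) :
  weak_almost_partial_metric d ->
  zero_complete d ->
  (G = M1 d \/ G = M2 d T) ->
  nearly_right_admissible phi ->
  asymptotic_normal phi ->
  (forall x y, d (T x) (T y) <= phi (G x y)) ->
  exists z : X, d z z = 0 /\
    (forall w, Fix_d d T w <-> w = z) /\
    (forall w, Fix T w <-> w = z) /\
    (forall x, Un_cv (fun n => d (Nat.iter n T x) z) 0).
Proof.
  intros Hd Hcomplete HG Hnra Has Hcon.
  assert (HGc : forall x y, G x y = M1 d x y \/ G x y = M2 d T x y)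
    by (intros x y; destruct HG as [-> | ->]; auto).
  pose proof (proj1 Has) as Hphi.
  pose proof (orbit_converges_to_fixed_point X d T G phi Hd HGc Hphi Hcon) as Horbit.
  pose proof (fixed_point_unique X d T G phi Hd HGc Hphi Hcon) as Huniq.
  destruct (Horbit x0 Hcomplete Hnra Has) as [z [Hfix _]].
  assert (HFix : forall w, Fix T w <-> w = z)
    by (intros w; split; [intros Hw; exact (Huniq w z Hw Hfix)|intros ->; exact Hfix]).
  exists z; split; [exact (fixed_point_self_distance X d T G phi Hd HGc Hphi Hcon z Hfix)|].
  split; [|split; [exact HFix|]].
  - intros w; rewrite (Fix_d_iff_Fix X d T G phi Hd HGc Hphi Hcon); apply HFix.
  - intros x; destruct (Horbit x Hcomplete Hnra Has) as [z' [Hfix' Hz']].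
    rewrite <- (Huniq z' z Hfix' Hfix); exact Hz'.
Qed.
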